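(* Let $\hat q$ be an $m\times m$ and $\hat p$ an $s\times s$ parametric matrix, let $M$ be an $n\times m$ matrix over $\mathfrak R$ and $N$ an $m\times s$ $(\hat q,\hat p)$-Manin matrix over $\mathfrak R$ such that every $N_{ij}$ commutes with every $M_{kl}$. Let $I=(i_1,\dots,i_r)$ be a multi-index with entries in $\{1,\dots,n\}$ and $K=(k_1\le\dots\le k_r)$ a nondecreasing multi-index with entries in $\{1,\dots,s\}$. Then $$\widehat{\mathrm{rper}}_{\hat p}((MN)_{IK})=\sum_J\widehat{\mathrm{rper}}_{\hat q}(M_{IJ})\,\widehat{\mathrm{rper}}_{\hat p}(N_{JK}),$$ the sum over all nondecreasing multi-indices $J=(j_1\le\dots\le j_r)$ with entries in $\{1,\dots,m\}$. In particular, if $m=n=s$, then $\widehat{\mathrm{rper}}_{\hat p}(MN)=\sum_J\widehat{\mathrm{rper}}_{\hat q}(M_{[n]J})\,\widehat{\mathrm{rper}}_{\hat p}(N_{J[n]})$, where $[n]=(1,2,\dots,n)$.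
   Context: $\mathfrak R$ is an associative unital algebra over $\mathbb C$. A parametric $n\times n$ matrix is a matrix $\hat q=(q_{ij})$ of nonzero complex numbers with $q_{ij}q_{ji}=1$, $q_{ii}=1$. For parametric $\hat q$ ($m\times m$) and $\hat p$ ($s\times s$), an $m\times s$ matrix $N$ over $\mathfrak R$ is a $(\hat q,\hat p)$-Manin matrix if $N_{ik}N_{jk}=q_{ji}N_{jk}N_{ik}$ for $i<j$ and all $k$, and $N_{ik}N_{jl}-q_{ji}p_{kl}N_{jl}N_{ik}+p_{kl}N_{il}N_{jk}-q_{ji}N_{jk}N_{il}=0$ for $i<j$, $k<l$. For a nondecreasing multi-index $J=(j_1\le\dots\le j_r)$ and $\sigma\in S_r$, $\mu(\hat p,J,\sigma)=\prod_{s<t,\ \sigma(s)>\sigma(t)}p_{j_{\sigma(t)}j_{\sigma(s)}}$. For a matrix $X$, any multi-index $I=(i_1,\dots,i_r)$ and nondecreasing $J$, $\mathrm{rper}_{\hat p}(X_{IJ})=\sum_{\sigma\in S_r}\mu(\hat p,J,\sigma)X_{i_1,j_{\sigma(1)}}\cdots X_{i_r,j_{\sigma(r)}}$, and $\widehat{\mathrm{rper}}_{\hat p}(X_{IJ})=\frac1{v(J)}\mathrm{rper}_{\hat p}(X_{IJ})$ where $v(J)=\prod_{a}|\{t:j_t=a\}|!$. $\widehat{\mathrm{rper}}_{\hat p}(X)$ for square $X$ is the case $I=J=(1,\dots,n)$. *)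

From HB Require Import structures.
From mathcomp Require Import all_boot all_order all_algebra all_fingroup.
From mathcomp Require Import complex.
From mathcomp Require Import Rstruct.
Set Implicit Arguments. Unset Strict Implicit. Unset Printing Implicit Defensive.
Import Order.TTheory GRing.Theory Num.Theory.
Local Open Scope ring_scope.

Definition CC : Type := complex Rdefinitions.R.
HB.instance Definition _ := GRing.Field.on CC.

Definition parametric (n : nat) (q : 'M[CC]_n) : Prop :=
  (forall i j, q i j != 0) /\ (forall i j, q i j * q j i = 1) /\ (forall i, q i i = 1).

Definition manin (A : algType CC) (m s : nat) (q : 'M[CC]_m) (p : 'M[CC]_s)
  (N : 'M[A]_(m, s)) : Prop :=
  (forall (i j : 'I_m) (k : 'I_s), (i < j)%N ->
     N i k * N j k = q j i *: (N j k * N i k)) /\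
  (forall (i j : 'I_m) (k l : 'I_s), (i < j)%N -> (k < l)%N ->
     N i k * N j l - (q j i * p k l) *: (N j l * N i k)
     + p k l *: (N i l * N j k) - q j i *: (N j k * N i l) = 0).

Definition nondecr (r s : nat) (J : 'I_r -> 'I_s) : bool :=
  [forall a : 'I_r, forall b : 'I_r, (a <= b)%N ==> (J a <= J b)%N].

Definition mu (s r : nat) (p : 'M[CC]_s) (J : 'I_r -> 'I_s) (sg : 'S_r) : CC :=
  \prod_(ab : 'I_r * 'I_r | (ab.1 < ab.2)%N && (sg ab.2 < sg ab.1)%N)
     p (J (sg ab.2)) (J (sg ab.1)).

Definition rper (A : algType CC) (a b r : nat) (p : 'M[CC]_b) (X : 'M[A]_(a, b))
  (I : 'I_r -> 'I_a) (J : 'I_r -> 'I_b) : A :=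
  \sum_(sg : 'S_r) mu p J sg *: \prod_(t < r) X (I t) (J (sg t)).

Definition vmult (r b : nat) (J : 'I_r -> 'I_b) : nat :=
  (\prod_(c : 'I_b) (#|[set t : 'I_r | J t == c]|)`!)%N.

Definition rperhat (A : algType CC) (a b r : nat) (p : 'M[CC]_b) (X : 'M[A]_(a, b))
  (I : 'I_r -> 'I_a) (J : 'I_r -> 'I_b) : A :=
  ((vmult J)%:R)^-1 *: rper p X I J.

Definition rperhat_sq (A : algType CC) (n : nat) (p : 'M[CC]_n) (X : 'M[A]_n) : A :=
  rperhat p X id id.

(* Expanding the entries of M N and moving the M-factors to the left (they
   commute with N) gives
     rper_p((MN)_{IK}) = sum_j (prod_t M_{i_t j_t}) rper_p(N_{jK})
   over all maps j.  For a Manin matrix N and nondecreasing K one has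
     rper_p(N_{(j o sg) K}) = mu(q, j, sg) rper_p(N_{jK}):
   for an adjacent transposition this is the Manin relation, applied to the
   terms sg and (a a+1) sg together, and mu(q, j, .) obeys the same cocycle
   rule, so bubble sort gives it for every sg.  Finally each map j is J o tau
   with J nondecreasing for exactly v(J) permutations tau (the stabiliser of J
   is a product of symmetric groups on the fibres of J), which regroups the sum
   as sum_J v(J)^-1 rper_q(M_{IJ}) rper_p(N_{JK}). *)

From HB Require Import structures.
From mathcomp Require Import all_boot all_order all_algebra all_fingroup.
From mathcomp Require Import complex Rstruct zify.
Set Implicit Arguments. Unset Strict Implicit. Unset Printing Implicit Defensive.
Import Order.TTheory GRing.Theory Num.Theory.
Local Open Scope ring_scope.

Section AdjacentTranspositions.
Variable r : nat.
Implicit Types (a : 'I_r.-1) (sg : 'S_r).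

Definition adj_lo a : 'I_r := widen_ord (leq_pred r) a.

Lemma adj_hi_subproof a : (a.+1 < r)%N.
Proof. by rewrite -ltn_predRL. Qed.

Definition adj_hi a : 'I_r := Ordinal (adj_hi_subproof a).

Definition adj_swap a : 'S_r := tperm (adj_lo a) (adj_hi a).

Lemma adj_lo_lt_hi a : (adj_lo a < adj_hi a)%N.
Proof. exact: ltnSn. Qed.

Lemma adj_lo_neq_hi a : adj_lo a != adj_hi a.
Proof. by rewrite -val_eqE neq_ltn adj_lo_lt_hi. Qed.

Lemma adj_swap_ltn a (x y : 'I_r) :
  (x, y) != (adj_lo a, adj_hi a) -> (x, y) != (adj_hi a, adj_lo a) ->
  (adj_swap a x < adj_swap a y)%N = (x < y)%N.
Proof.
rewrite /adj_swap !permE /= !xpair_eqE -!val_eqE /=.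
by case: eqP; case: eqP; case: eqP; case: eqP => //= *; lia.
Qed.

Definition inversions sg : {set 'I_r * 'I_r} :=
  [set ab : 'I_r * 'I_r | (ab.1 < ab.2)%N && (sg ab.2 < sg ab.1)%N].

Definition adj_swap2 a (ab : 'I_r * 'I_r) := (adj_swap a ab.1, adj_swap a ab.2).

Lemma adj_swap2K a : involutive (adj_swap2 a).
Proof. by move=> [x y]; rewrite /adj_swap2 /= !tpermK. Qed.

Lemma adj_pair_notin_swap2 a sg :
  (adj_lo a, adj_hi a) \notin adj_swap2 a @: inversions sg.
Proof.
rewrite (can_imset_pre _ (adj_swap2K a)) !inE /= /adj_swap tpermL tpermR.
by rewrite ltnNge (ltnW (adj_lo_lt_hi a)).
Qed.

Lemma inversions_adj_swap a sg : (sg (adj_lo a) < sg (adj_hi a))%N ->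
  inversions (adj_swap a * sg) = (adj_lo a, adj_hi a) |: adj_swap2 a @: inversions sg.
Proof.
move=> asc; rewrite (can_imset_pre _ (adj_swap2K a)).
apply/setP => -[x y]; rewrite !inE /= !permM.
have [[-> ->] | ne_lohi] := eqVneq (x, y) (adj_lo a, adj_hi a).
  by rewrite /adj_swap tpermL tpermR adj_lo_lt_hi.
have [[-> ->] | ne_hilo] := eqVneq (x, y) (adj_hi a, adj_lo a).
  by rewrite /adj_swap tpermL tpermR (ltnNge (sg (adj_hi a))) (ltnW asc) !andbF.
by rewrite (adj_swap_ltn ne_lohi ne_hilo).
Qed.

Lemma card_inversions_adj_swap a sg : (sg (adj_lo a) < sg (adj_hi a))%N ->
  #|inversions (adj_swap a * sg)| = #|inversions sg|.+1.
Proof.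
move=> asc; rewrite inversions_adj_swap // cardsU1 adj_pair_notin_swap2.
by rewrite card_imset //; apply: can_inj (adj_swap2K a).
Qed.

End AdjacentTranspositions.

Section NondecreasingMaps.
Variables r m : nat.
Implicit Types J : 'I_r -> 'I_m.

Lemma nondecrP J :
  reflect (forall a b : 'I_r, (a <= b)%N -> (J a <= J b)%N) (nondecr J).
Proof.
apply: (iffP forallP) => [ndJ a b | monoJ a].
  exact/implyP/(forallP (ndJ a)).
by apply/forallP => b; apply/implyP/monoJ.
Qed.

Lemma eq_nondecr J1 J2 : J1 =1 J2 -> nondecr J1 = nondecr J2.
Proof.
by move=> eJ; apply: eq_forallb => a; apply: eq_forallb => b; rewrite !eJ.
Qed.

Lemma nondecr_sorted J : nondecr J = sorted <=%O [tuple J t | t < r].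
Proof.
case: r J => [|r'] J; first by rewrite tuple0; apply/forallP => -[].
rewrite le_sorted_pairwise; apply/forallP/(pairwiseP (J ord0)) => [ndJ u v | ndJ a].
  rewrite !inE size_tuple => lt_ur lt_vr lt_uv.
  rewrite -[u]/(Ordinal lt_ur : nat) -[v]/(Ordinal lt_vr : nat) !nth_mktuple leEord.
  by move/forallP/(_ (Ordinal lt_vr))/implyP: (ndJ (Ordinal lt_ur)); apply; apply: ltnW.
apply/forallP => b; apply/implyP; rewrite leq_eqVlt => /predU1P[/val_inj -> // | lt_ab].
by have := ndJ a b; rewrite !inE size_tuple !ltn_ord !nth_mktuple leEord; apply.
Qed.

Lemma nondecr_perm_eq J1 J2 (s : 'S_r) :
  nondecr J1 -> nondecr J2 -> J1 =1 J2 \o s -> J1 =1 J2.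
Proof.
rewrite !nondecr_sorted => sorted1 sorted2 eJ.
have perm12 : perm_eq [tuple J1 t | t < r] [tuple J2 t | t < r].
  apply/tuple_permP; exists s; congr val; apply: eq_from_tnth => t.
  by rewrite !tnth_mktuple eJ.
move/val_inj: (sorted_eq le_trans le_anti sorted1 sorted2 perm12) => eq12 t.
by have := congr1 (fun T => tnth T t) eq12; rewrite !tnth_mktuple.
Qed.

Lemma nondecr_sort J : exists s : 'S_r, nondecr (J \o s).
Proof.
set T := [tuple J t | t < r].
have /tuple_permP[s sortT] : perm_eq (sort <=%O T) T by rewrite perm_sort.
exists s; rewrite nondecr_sorted.
have -> : [tuple (J \o s) t | t < r] = [tuple tnth T (s t) | t < r].
  by apply: eq_from_tnth => t; rewrite !tnth_mktuple.
by rewrite -sortT; apply: sort_sorted; apply: le_total.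
Qed.

Lemma nondecr_adjacent J :
  (forall a : 'I_r.-1, (J (adj_lo a) <= J (adj_hi a))%N) -> nondecr J.
Proof.
move=> Jadj; suff Jup d (x y : 'I_r) : y = (x + d)%N :> nat -> (J x <= J y)%N.
  by apply/nondecrP => x y /subnKC /esym /Jup.
elim: d y => [|d IHd] y Exy.
  by have -> : y = x by apply/val_inj; rewrite /= Exy addn0.
have lt_xd : (x + d < r.-1)%N by rewrite ltn_predRL -addnS -Exy.
apply: leq_trans (IHd (adj_lo (Ordinal lt_xd)) erefl) _.
by have -> : y = adj_hi (Ordinal lt_xd) by apply/val_inj; rewrite /= Exy addnS.
Qed.

End NondecreasingMaps.

Lemma perm_nondecr_eq1 r (sg : 'S_r) : nondecr sg -> sg = 1%g.
Proof.
move=> ndsg; apply/permP => t; rewrite perm1.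
by apply: (@nondecr_perm_eq _ _ sg id sg) => //; apply/nondecrP.
Qed.

Lemma perm_adj_swap_ind r (P : 'S_r -> Prop) :
  P 1%g -> (forall a sg, P sg -> P (adj_swap a * sg)%g) -> forall sg, P sg.
Proof.
move=> P1 Pswap; suff Pk k sg : (#|inversions sg| < k)%N -> P sg.
  by move=> sg; apply: (Pk _ sg (ltnSn _)).
elim: k sg => // k IHk sg lt_inv_k.
have [/existsP[a desc] | /existsPn asc] :=
  boolP [exists a, (sg (adj_hi a) < sg (adj_lo a))%N]; last first.
  suff -> : sg = 1%g by [].
  by apply/perm_nondecr_eq1/nondecr_adjacent => a; rewrite leqNgt asc.
set sg' := (adj_swap a * sg)%g.
have sgE : sg = (adj_swap a * sg')%g by rewrite /sg' mulgA tperm2 mul1g.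
have asc' : (sg' (adj_lo a) < sg' (adj_hi a))%N by rewrite !permM tpermL tpermR.
have := card_inversions_adj_swap asc'; rewrite -sgE => card_sg.
by rewrite sgE; apply/Pswap/IHk; rewrite -ltnS -card_sg.
Qed.

Section InversionWeight.
Variables (s r : nat) (p : 'M[CC]_s) (J : 'I_r -> 'I_s).

Lemma mu_inversions (sg : 'S_r) :
  mu p J sg = \prod_(ab in inversions sg) p (J (sg ab.2)) (J (sg ab.1)).
Proof. by apply: eq_bigl => ab; rewrite inE. Qed.

Lemma mu1 : mu p J 1 = 1.
Proof.
rewrite mu_inversions big_pred0 // => -[x y].
by rewrite inE /= !perm1; case: ltngtP.
Qed.

Lemma mu_adj_swap_asc a (sg : 'S_r) : (sg (adj_lo a) < sg (adj_hi a))%N ->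
  mu p J (adj_swap a * sg) = p (J (sg (adj_lo a))) (J (sg (adj_hi a))) * mu p J sg.
Proof.
move=> asc; rewrite !mu_inversions inversions_adj_swap // big_setU1 ?adj_pair_notin_swap2 //=.
rewrite big_imset /=; last exact: in2W (can_inj (adj_swap2K a)).
by rewrite !permM /adj_swap tpermL tpermR; under eq_bigr do rewrite !permM !tpermK.
Qed.

Hypothesis p_inv : forall i j, p i j * p j i = 1.

Lemma mu_adj_swap a (sg : 'S_r) :
  mu p J (adj_swap a * sg) = p (J (sg (adj_lo a))) (J (sg (adj_hi a))) * mu p J sg.
Proof.
have [asc | desc | /val_inj/perm_inj eq_lohi] := ltngtP (sg (adj_lo a)) (sg (adj_hi a)).
- exact: mu_adj_swap_asc.
- have asc : ((adj_swap a * sg)%g (adj_lo a) < (adj_swap a * sg)%g (adj_hi a))%N.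
    by rewrite !permM tpermL tpermR.
  have := mu_adj_swap_asc asc; rewrite mulgA tperm2 mul1g !permM tpermL tpermR => ->.
  by rewrite mulrA p_inv mul1r.
- by move: (adj_lo_neq_hi a); rewrite eq_lohi eqxx.
Qed.

End InversionWeight.

Section AdjacentProducts.
Variables (r : nat) (a : 'I_r.-1).
Local Notation lo := (adj_lo a).
Local Notation hi := (adj_hi a).
Local Notation ins := (insubd lo).

Lemma sum_adj_swap_pairs (V : nmodType) (f : 'S_r -> V) :
  \sum_(sg : 'S_r) f sg =
  \sum_(sg : 'S_r | (sg lo < sg hi)%N) (f sg + f (adj_swap a * sg)%g).
Proof.
rewrite (bigID (fun sg : 'S_r => (sg lo < sg hi)%N)) big_split /=; congr (_ + _).
rewrite (reindex_inj (mulgI (adj_swap a))); apply: eq_bigl => sg /=.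
rewrite !permM tpermL tpermR ltn_neqAle.
by rewrite val_eqE (inj_eq perm_inj) eq_sym adj_lo_neq_hi leqNgt negbK.
Qed.

Lemma prod_adj_split (R : pzRingType) (F : 'I_r -> R) :
  \prod_(t < r) F t =
  \prod_(0 <= t < a) F (ins t) * (F lo * F hi) * \prod_(a.+2 <= t < r) F (ins t).
Proof.
have lt_ar := adj_hi_subproof a.
have -> : \prod_(t < r) F t = \prod_(0 <= t < r) F (ins t).
  by rewrite big_mkord; apply: eq_bigr => t _; rewrite valKd.
rewrite (@big_cat_nat _ _ _ a) //=; last by rewrite ltnW // ltnW.
rewrite (@big_ltn _ _ _ a); last by rewrite ltnW.
rewrite (@big_ltn _ _ _ a.+1) // !mulrA.
have -> : ins a = lo by apply: val_inj; rewrite val_insubd ltnW.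
by have -> : ins a.+1 = hi by apply: val_inj; rewrite val_insubd lt_ar.
Qed.

Lemma prod_adj_context (R : pzRingType) (F : 'I_r -> 'I_r -> R) (f g : 'I_r -> 'I_r) :
  (forall t, t != lo -> t != hi -> f t = t) ->
  (forall t, t != lo -> t != hi -> g t = t) ->
  \prod_(t < r) F (f t) (g t) =
  \prod_(0 <= t < a) F (ins t) (ins t) * (F (f lo) (g lo) * F (f hi) (g hi)) *
  \prod_(a.+2 <= t < r) F (ins t) (ins t).
Proof.
move=> f_fix g_fix; have lt_ar := adj_hi_subproof a.
have ins_fix t : (t < a)%N || (a.+2 <= t < r)%N -> f (ins t) = ins t /\ g (ins t) = ins t.
  move=> out_t; rewrite f_fix ?g_fix // -val_eqE val_insubd /=;
    by case: ifP => lt_tr; case/orP: out_t => [|/andP[]]; lia.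
rewrite (prod_adj_split (fun t => F (f t) (g t))); congr (_ * _ * _).
all: apply: eq_big_nat => t t_range.
  by have /ins_fix[-> ->] : (t < a)%N || (a.+2 <= t < r)%N by rewrite (andP t_range).2.
by have /ins_fix[-> ->] : (t < a)%N || (a.+2 <= t < r)%N by rewrite t_range orbT.
Qed.

End AdjacentProducts.

Lemma eq_rper (A : algType CC) a b r (p : 'M[CC]_b) (X : 'M[A]_(a, b))
    (I1 I2 : 'I_r -> 'I_a) (J1 J2 : 'I_r -> 'I_b) :
  I1 =1 I2 -> J1 =1 J2 -> rper p X I1 J1 = rper p X I2 J2.
Proof.
move=> eI eJ; apply: eq_bigr => sg _; congr (_ *: _).
  by apply: eq_bigr => ab _; rewrite !eJ.
by apply: eq_bigr => t _; rewrite eI eJ.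
Qed.

Section ManinMatrix.
Variables (A : algType CC) (m b : nat) (q : 'M[CC]_m) (p : 'M[CC]_b) (N : 'M[A]_(m, b)).
Hypotheses (q_par : parametric q) (p_par : parametric p) (N_manin : manin q p N).

Lemma manin_exchange (x y : 'I_m) (k l : 'I_b) : (k <= l)%N ->
  N y k * N x l + p k l *: (N y l * N x k) =
  q x y *: (N x k * N y l + p k l *: (N x l * N y k)).
Proof.
have [_ [q_inv q_diag]] := q_par; have [_ [_ p_diag]] := p_par.
have [N_col N_rel] := N_manin.
have solve (X Y Z W : A) (c d : CC) : X - (c * d) *: Y + d *: Z - c *: W = 0 ->
    X + d *: Z = c *: (W + d *: Y).
  move=> rel; apply/eqP; rewrite -subr_eq0 -rel scalerDr scalerA opprD !addrA.
  by rewrite (addrAC X (- _)) (addrAC _ (- ((c * d) *: Y))).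
rewrite leq_eqVlt => /predU1P[/val_inj <- | lt_kl].
  rewrite p_diag !scale1r.
  have [lt_xy | lt_yx | /val_inj ->] := ltngtP x y; last by rewrite q_diag scale1r.
    by rewrite (N_col _ _ k lt_xy) -scalerDr scalerA q_inv scale1r.
  by rewrite (N_col _ _ k lt_yx) -scalerDr.
have [lt_xy | lt_yx | /val_inj ->] := ltngtP x y; last by rewrite q_diag scale1r.
  by rewrite (solve _ _ _ _ _ _ (N_rel _ _ _ _ lt_xy lt_kl)) scalerA q_inv scale1r.
exact: solve (N_rel _ _ _ _ lt_yx lt_kl).
Qed.

Variables (r : nat) (K : 'I_r -> 'I_b).
Hypothesis K_nondecr : nondecr K.

Lemma rper_adj_swap (a : 'I_r.-1) (j : 'I_r -> 'I_m) :
  rper p N (j \o adj_swap a) K = q (j (adj_lo a)) (j (adj_hi a)) *: rper p N j K.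
Proof.
have [_ [p_inv _]] := p_par.
rewrite /rper !(sum_adj_swap_pairs a) scaler_sumr; apply: eq_bigr => sg asc.
rewrite !mu_adj_swap //.
set k := K (sg (adj_lo a)); set l := K (sg (adj_hi a)); set mu_sg := mu p K sg.
have le_kl : (k <= l)%N by move/nondecrP: K_nondecr; apply; apply: ltnW.
have swapE (j' : 'I_r -> 'I_m) : \prod_(t < r) N (j' t) (K ((adj_swap a * sg)%g t)) =
    \prod_(t < r) N (j' t) (K (sg (adj_swap a t))).
  by apply: eq_bigr => t _; rewrite permM.
have fix_swap t : t != adj_lo a -> t != adj_hi a -> adj_swap a t = t.
  by move=> ne_lo ne_hi; rewrite /adj_swap tpermD // eq_sym.
have fix_id t : t != adj_lo a -> t != adj_hi a -> id t = t by [].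
pose F t u := N (j t) (K (sg u)).
rewrite !swapE (prod_adj_context F fix_swap fix_id) (prod_adj_context F fix_swap fix_swap).
rewrite (prod_adj_context F fix_id fix_id) (prod_adj_context F fix_id fix_swap).
rewrite /F /= /adj_swap tpermL tpermR -/k -/l.
have factor (L R u v : A) : mu_sg *: (L * u * R) + (p k l * mu_sg) *: (L * v * R) =
    mu_sg *: (L * (u + p k l *: v) * R).
  by rewrite mulrDr mulrDl scalerDr -scalerAr -scalerAl scalerA [_ * p k l]mulrC.
rewrite !factor manin_exchange //.
by rewrite -scalerAr -scalerAl !scalerA mulrC.
Qed.

Lemma rper_perm (j : 'I_r -> 'I_m) (sg : 'S_r) :
  rper p N (j \o sg) K = mu q j sg *: rper p N j K.
Proof.
have [_ [q_inv _]] := q_par.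
elim/perm_adj_swap_ind: sg j => [|a sg IHsg] j.
  by rewrite mu1 scale1r; apply: eq_rper => // t; rewrite /= perm1.
rewrite mu_adj_swap // -scalerA -IHsg -rper_adj_swap.
by apply: eq_rper => // t; rewrite /= permM.
Qed.

End ManinMatrix.

Section FibreStabiliser.
Variables (r b : nat) (J : 'I_r -> 'I_b).

Definition fibre (c : 'I_b) : {set 'I_r} := [set t | J t == c].

Definition perm_stab : {set 'S_r} := [set tau : 'S_r | [forall t, J (tau t) == J t]].

Definition restr_fibres (tau : 'S_r) : {ffun 'I_b -> 'S_r} :=
  [ffun c => restr_perm (fibre c) tau].

Lemma perm_stab_astabs tau c : tau \in perm_stab -> tau \in 'N(fibre c | 'P)%g.
Proof.
rewrite inE => /forallP Jtau; apply/astabsP => t.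
by rewrite /= apermE !inE (eqP (Jtau t)).
Qed.

Lemma restr_fibres_inj : {in perm_stab &, injective restr_fibres}.
Proof.
move=> tau1 tau2 stab1 stab2 /ffunP/(_ _)/permP eq12; apply/permP => t.
have := eq12 (J t) t; rewrite !ffunE.
by rewrite !restr_permE ?perm_stab_astabs // inE.
Qed.

Lemma restr_fibres_stab :
  restr_fibres @: perm_stab =
  [set g : {ffun 'I_b -> 'S_r} | [forall c, perm_on (fibre c) (g c)]].
Proof.
apply/setP => g; rewrite inE; apply/imsetP/forallP => [[tau _ ->] c | g_on].
  by rewrite ffunE restr_perm_on.
have gJ t : J (g (J t) t) = J t.
  by have := perm_closed t (g_on (J t)); rewrite !inE eqxx => /eqP.
have g_inj : injective (fun t => g (J t) t).
  move=> t1 t2 /= eq12; have eJ : J t1 = J t2 by rewrite -gJ eq12 gJ.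
  by move: eq12; rewrite eJ => /perm_inj.
have stab_g : perm g_inj \in perm_stab.
  by rewrite inE; apply/forallP => t; rewrite permE gJ.
exists (perm g_inj) => //; apply/ffunP => c; rewrite ffunE; apply/permP => t.
have [t_c | t_nc] := boolP (t \in fibre c).
  by rewrite restr_permE ?perm_stab_astabs // permE; move: t_c; rewrite inE => /eqP ->.
by rewrite !(out_perm _ t_nc) // restr_perm_on.
Qed.

Lemma card_perm_stab : #|perm_stab| = vmult J.
Proof.
rewrite -(card_in_imset restr_fibres_inj) restr_fibres_stab.
transitivity #|family (fun c => perm_on (fibre c))|.
  by apply: eq_card => g; rewrite !inE; apply/forallP/familyP.
rewrite card_family foldrE big_map big_enum; apply: eq_bigr => c _.
exact: card_perm.
Qed.

End FibreStabiliser.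

Lemma vmult_gt0 r b (J : 'I_r -> 'I_b) : (0 < vmult J)%N.
Proof. by rewrite prodn_gt0 // => c; apply: fact_gt0. Qed.

Section Regrouping.
Variables r m : nat.
Implicit Types J j : {ffun 'I_r -> 'I_m}.

Definition reorder J (tau : 'S_r) : {ffun 'I_r -> 'I_m} := [ffun t => J (tau t)].

Definition reorder_count J j : nat := #|[set tau : 'S_r | reorder J tau == j]|.

Lemma reorder_count_sorted j (s : 'S_r) :
  reorder_count (reorder j s) j = vmult (reorder j s).
Proof.
rewrite /reorder_count -card_perm_stab -(card_preimset (perm_stab _) (mulgI s)).
apply: eq_card => tau; rewrite !inE; apply/eqP/forallP => [reorder_tau t | stab_tau].
  have := congr1 (fun f : {ffun 'I_r -> 'I_m} => f (s t)) reorder_tau.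
  by rewrite permM !ffunE => ->.
apply/ffunP => t; have := stab_tau (s^-1 t)%g.
by rewrite permM permKV !ffunE => /eqP ->; rewrite permKV.
Qed.

Lemma reorder_count_eq0 J j (s : 'S_r) :
  nondecr J -> nondecr (reorder j s) -> J != reorder j s -> reorder_count J j = 0%N.
Proof.
move=> ndJ nds neJ; apply/eqP; rewrite cards_eq0; apply/eqP/setP => tau.
rewrite !inE; apply/negbTE/eqP => reorder_tau; move/eqP: neJ; apply.
apply/ffunP/(nondecr_perm_eq ndJ nds (s := (tau^-1 * s^-1)%g)) => t /=.
by rewrite -reorder_tau !ffunE !permM !permKV.
Qed.

Lemma sum_vmult_reorder_count j :
  \sum_(J : {ffun 'I_r -> 'I_m} | nondecr J) (vmult J)%:R^-1 * (reorder_count J j)%:R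
  = 1 :> CC.
Proof.
have [s nd_js] := nondecr_sort j.
have nds : nondecr (reorder j s) by rewrite (eq_nondecr (J2 := j \o s)) // => t; rewrite ffunE.
rewrite (bigD1 (reorder j s)) //= big1 ?addr0 => [|J /andP[ndJ neJ]].
  by rewrite reorder_count_sorted mulVf // pnatr_eq0 -lt0n vmult_gt0.
by rewrite (reorder_count_eq0 ndJ nds neJ) mulr0.
Qed.

Lemma sum_reorder_nondecr (V : lmodType CC) (G : {ffun 'I_r -> 'I_m} -> V) :
  \sum_(J : {ffun 'I_r -> 'I_m} | nondecr J)
     (vmult J)%:R^-1 *: \sum_(tau : 'S_r) G (reorder J tau) =
  \sum_j G j.
Proof.
have count_sum J :
    \sum_(tau : 'S_r) G (reorder J tau) = \sum_j (reorder_count J j)%:R *: G j.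
  rewrite (partition_big (reorder J) xpredT) //=; apply: eq_bigr => j _.
  rewrite (eq_bigr (fun=> G j)) => [|tau /eqP -> //].
  by rewrite sumr_const scaler_nat /reorder_count cardsE.
under eq_bigr do rewrite count_sum scaler_sumr.
rewrite exchange_big /=; apply: eq_bigr => j _.
by under eq_bigr do rewrite scalerA; rewrite -scaler_suml sum_vmult_reorder_count scale1r.
Qed.

End Regrouping.

Section ProductFormula.
Variables (A : algType CC) (n m s : nat) (q : 'M[CC]_m) (p : 'M[CC]_s).
Variables (M : 'M[A]_(n, m)) (N : 'M[A]_(m, s)).
Hypothesis NM_comm : forall i j k l, N i j * M k l = M k l * N i j.
Variables (r : nat) (I : 'I_r -> 'I_n) (K : 'I_r -> 'I_s).

Lemma rper_mulmx :
  rper p (M *m N) I K =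
  \sum_(f : {ffun 'I_r -> 'I_m}) (\prod_(t < r) M (I t) (f t)) * rper p N f K.
Proof.
have expand sg : \prod_(t < r) (M *m N) (I t) (K (sg t)) =
    \sum_(f : {ffun 'I_r -> 'I_m})
      (\prod_(t < r) M (I t) (f t)) * \prod_(t < r) N (f t) (K (sg t)).
  under eq_bigr do rewrite mxE.
  rewrite bigA_distr_bigA; apply: eq_bigr => f _.
  by rewrite prodrM_comm // => t u _ _; apply/esym/NM_comm.
rewrite /rper; under eq_bigr do rewrite expand scaler_sumr.
rewrite exchange_big; apply: eq_bigr => f _ /=.
by rewrite mulr_sumr; apply: eq_bigr => sg _; rewrite scalerAr.
Qed.

Hypotheses (q_par : parametric q) (p_par : parametric p) (N_manin : manin q p N).
Hypothesis K_nondecr : nondecr K.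

Lemma rper_mul_rper (J : {ffun 'I_r -> 'I_m}) :
  rper q M I J * rper p N J K =
  \sum_(tau : 'S_r) (\prod_(t < r) M (I t) (reorder J tau t)) * rper p N (reorder J tau) K.
Proof.
rewrite {1}/rper mulr_suml; apply: eq_bigr => tau _.
rewrite -scalerAl scalerAr -rper_perm //; congr (_ * _).
  by apply: eq_bigr => t _; rewrite ffunE.
by apply: eq_rper => // t; rewrite ffunE.
Qed.

Lemma rperhat_mulmx :
  rperhat p (M *m N) I K =
  \sum_(J : {ffun 'I_r -> 'I_m} | nondecr J) rperhat q M I J * rperhat p N J K.
Proof.
pose G (f : {ffun 'I_r -> 'I_m}) := (\prod_(t < r) M (I t) (f t)) * rper p N f K.
rewrite /rperhat rper_mulmx -(sum_reorder_nondecr G) scaler_sumr; apply: eq_bigr => J _.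
by rewrite -scalerAl -scalerAr rper_mul_rper !scalerA mulrC.
Qed.

End ProductFormula.

Theorem mainTheorem12 :
  (forall (A : algType CC) (n m s : nat) (q : 'M[CC]_m) (p : 'M[CC]_s)
     (M : 'M[A]_(n, m)) (N : 'M[A]_(m, s)),
     parametric q -> parametric p -> manin q p N ->
     (forall i j k l, N i j * M k l = M k l * N i j) ->
     forall (r : nat) (I : 'I_r -> 'I_n) (K : 'I_r -> 'I_s), nondecr K ->
       rperhat p (M *m N) I K =
       \sum_(J : {ffun 'I_r -> 'I_m} | nondecr J)
          rperhat q M I J * rperhat p N J K)
  /\
  (forall (A : algType CC) (n : nat) (q p : 'M[CC]_n) (M N : 'M[A]_n),
     parametric q -> parametric p -> manin q p N ->
     (forall i j k l, N i j * M k l = M k l * N i j) ->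
     rperhat_sq p (M *m N) =
     \sum_(J : {ffun 'I_n -> 'I_n} | nondecr J)
        rperhat q M id J * rperhat p N J id).
Proof.
split=> [A n m s q p M N * | A n q p M N *]; first by apply: rperhat_mulmx.
by apply: rperhat_mulmx => //; apply/nondecrP.
Qed.
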